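(* Let $n$ be a positive integer and let $A(n)=(a_{ij})_{i,j\in\mathbb{N}}$ be the greedy matrix described in the context. For each $j\geq 1$ let $f(j)$ be the smallest $i$ such that $a_{ij}=1$. Then $f$ is monotonically increasing, i.e. $f(j)\le f(k)$ whenever $1\le j<k$.
   Context: $\mathbb{N}=\{1,2,3,\dots\}$. Fix a positive integer $n$. The infinite $\{0,1\}$-matrix $A(n)=(a_{ij})_{i,j\in\mathbb{N}}$ is defined recursively. Its entries are determined row by row (row $1$ first), and within each row from left to right, so that $a_{kl}$ is determined after all $a_{ij}$ with $i<k$ and all $a_{kj}$ with $j<l$. One sets $a_{kl}=1$ if and only if all of the following hold: (1) $\sum_{j<l}a_{kj}<n+1$; (2) $\sum_{i<k}a_{il}<n+1$; (3) there is no pair $(i,j)$ with $1\le i<k$, $1\le j<l$ and $a_{ij}=a_{il}=a_{kj}=1$. Otherwise $a_{kl}=0$. *)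

From mathcomp Require Import all_boot.
Set Implicit Arguments. Unset Strict Implicit. Unset Printing Implicit Defensive.

(* Indices are 1-based; entries with index 0 are false.
   [P] is the (already determined) matrix of rows 1..k-1, [s] the already
   determined prefix of row k (s`_(j-1) = a_{kj} for j < l). *)
Definition greedy_entry (n : nat) (P : nat -> nat -> bool) (k l : nat)
    (s : seq bool) : bool :=
  [&& count id s < n.+1,                                  (* (1) *)
      count (fun i => P i l) (iota 1 k.-1) < n.+1          (* (2) *)
    &
      ~~ has (fun i => has (fun j => [&& P i j, P i l & nth false s j.-1])
                           (iota 1 l.-1))
             (iota 1 k.-1)].                               (* (3) *)

Fixpoint greedy_row_prefix (n : nat) (P : nat -> nat -> bool) (k l : nat)
    : seq bool :=
  match l with
  | 0 => [::]
  | l'.+1 => let s := greedy_row_prefix n P k l' in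
             rcons s (greedy_entry n P k l'.+1 s)
  end.

(* greedy_rows n k i j = a_{ij} if 1 <= i <= k, and false otherwise *)
Fixpoint greedy_rows (n k : nat) : nat -> nat -> bool :=
  match k with
  | 0 => fun _ _ => false
  | k'.+1 => let P := greedy_rows n k' in
             fun i j => if i <= k' then P i j
                        else if (i == k'.+1) && (0 < j)
                             then nth false (greedy_row_prefix n P k'.+1 j) j.-1
                             else false
  end.

Definition a (n i j : nat) : bool := greedy_rows n i i j.

From mathcomp Require Import all_boot.

(* If f k < f j, the column j is empty above row f k, so when the greedy rule
   reaches a_{f k, j} conditions (2) and (3) hold trivially, and (1) holds
   because the row count before column j is at most the one before column k,
   where the rule placed a one.  Hence a_{f k, j} = 1, contradicting the
   minimality of f j. *)

Lemma greedy_rows_stable n k i j :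
  i <= k -> greedy_rows n k i j = greedy_rows n i i j.
Proof.
elim: k => [|k IHk] lei; first by move: lei; rewrite leqn0 => /eqP ->.
case: (leqP i k) => [leik | ltki]; first by rewrite /= leik IHk.
by have -> : i = k.+1 by apply/eqP; rewrite eqn_leq lei ltki.
Qed.

Lemma size_greedy_row_prefix n P k l : size (greedy_row_prefix n P k l) = l.
Proof. by elim: l => [|l IHl] //=; rewrite size_rcons IHl. Qed.

Lemma take_greedy_row_prefix n P k l m : m <= l ->
  take m (greedy_row_prefix n P k l) = greedy_row_prefix n P k m.
Proof.
elim: l => [|l IHl] leml; first by move: leml; rewrite leqn0 => /eqP ->.
case: (leqP m l) => [leml' | ltlm]; last first.
  have -> : m = l.+1 by apply/eqP; rewrite eqn_leq leml ltlm.
  by rewrite take_oversize // size_greedy_row_prefix.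
rewrite /= -cats1 take_cat size_greedy_row_prefix.
case: ltnP => [ltml | lelm]; first exact: IHl.
have -> : m = l by apply/eqP; rewrite eqn_leq leml' lelm.
by rewrite subnn take0 cats0.
Qed.

Lemma count_greedy_row_prefix_mono n P k l m : m <= l ->
  count id (greedy_row_prefix n P k m) <= count id (greedy_row_prefix n P k l).
Proof.
move=> leml.
rewrite -(cat_take_drop m (greedy_row_prefix n P k l)) count_cat.
by rewrite take_greedy_row_prefix // leq_addr.
Qed.

Lemma a_greedy_entry n i j : 0 < j ->
  a n i.+1 j = greedy_entry n (greedy_rows n i) i.+1 j
                 (greedy_row_prefix n (greedy_rows n i) i.+1 j.-1).
Proof.
case: j => [|j] // _.
by rewrite /a /= ltnn eqxx /= nth_rcons size_greedy_row_prefix ltnn eqxx.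
Qed.

Lemma greedy_entry_empty_column n P k l s :
  {in iota 1 k.-1, forall x, P x l = false} ->
  count id s < n.+1 -> greedy_entry n P k l s.
Proof.
move=> emptyl counts; apply/and3P; split=> //.
- by rewrite (eq_in_count (a2 := pred0)) ?count_pred0 // => x /emptyl ->.
- by apply/hasPn => x /emptyl Pxl; apply/hasPn => y _; rewrite Pxl andbF.
Qed.

Lemma a_empty_column_left n i j k : 0 < j -> j <= k ->
  (forall x, 1 <= x <= i -> a n x j = false) ->
  a n i.+1 k -> a n i.+1 j.
Proof.
move=> j_gt0 lejk emptyj.
rewrite !a_greedy_entry ?(leq_trans j_gt0 lejk) // => /and3P [count_k _ _].
apply: greedy_entry_empty_column.
- move=> x; rewrite mem_iota add1n => /andP [x_gt0 ltxi].
  by rewrite greedy_rows_stable //; apply: emptyj; rewrite x_gt0.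
- apply: leq_ltn_trans count_k; apply: count_greedy_row_prefix_mono.
  by rewrite -!subn1 leq_sub2r.
Qed.

Theorem lemma3p3 (n : nat) (f : nat -> nat) :
  0 < n ->
  (forall j, 1 <= j ->
     [/\ 1 <= f j, a n (f j) j & forall i, 1 <= i -> a n i j -> f j <= i]) ->
  forall j k, 1 <= j -> j < k -> f j <= f k.
Proof.
move=> _ hf j k j_gt0 ltjk.
have [_ _ fj_min] := hf j j_gt0.
have [fk_gt0 a_fk _] := hf k (leq_trans j_gt0 (ltnW ltjk)).
rewrite leqNgt; apply/negP => ltfkfj.
have emptyj x : 1 <= x < f j -> a n x j = false.
  by case/andP=> x_gt0 ltxfj; apply/negP => /(fj_min x x_gt0); rewrite leqNgt ltxfj.
have : a n (f k) j.
  rewrite -(prednK fk_gt0) in a_fk ltfkfj *.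
  apply: a_empty_column_left (ltnW ltjk) _ a_fk => // x /andP [x_gt0 lexfk].
  by apply: emptyj; rewrite x_gt0 (leq_ltn_trans lexfk) // ltnW.
by move/(fj_min _ fk_gt0); rewrite leqNgt ltfkfj.
Qed.
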